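(* An iterated graph system satisfies conditions (GR1) and (GR2) if and only if its replacement graphs have uniformly bounded degree, i.e. \[ \sup_{w\in W_\#}\deg(w)<\infty, \] where $\deg(w)$ denotes the degree of $w$ in the replacement graph $G_{|w|}$.
   Context: A graph is a pair $(V,E)$ with $V$ finite non-empty and $E\subseteq V\times V$ such that $(x,y)\in E$ implies $(y,x)\notin E$; write $\{x,y\}\in E$ if $(x,y)\in E$ or $(y,x)\in E$. The degree of $x$ is the number of $y$ with $\{x,y\}\in E$. An iterated graph system (IGS) consists of a connected graph $G_1=(S,E)$, a finite set $\mathcal T$ of types, a surjective typing function $\mathfrak t:E\to\mathcal T$, and for each $t\in\mathcal T$ a non-empty set $I_t\subseteq S\times S$ (gluing rules). Let $W_m=S^m$ (words $w=w_1\cdots w_m$), $W_\#=\bigcup_{m\ge1}W_m$, $|w|$ the length of $w$, and $[w]_k=w_1\cdots w_k$. The replacement graphs $G_m=(W_m,E_m)$ with typings $\mathfrak t_m:E_m\to\mathcal T$ are defined recursively: $G_1$ and $\mathfrak t_1=\mathfrak t$ are given; for $w,v\in W_{m+1}$, $(w,v)\in E_{m+1}$ iff either (1) $[w]_m=[v]_m$ and $(w_{m+1},v_{m+1})\in E$, in which case $\mathfrak t_{m+1}(w,v)=\mathfrak t(w_{m+1},v_{m+1})$; or (2) $([w]_m,[v]_m)\in E_m$ and $(w_{m+1},v_{m+1})\in I_{\mathfrak t_m([w]_m,[v]_m)}$, in which case $\mathfrak t_{m+1}(w,v)=\mathfrak t_m([w]_m,[v]_m)$. For $t\in\mathcal T$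 and $w\in S$ let $\mathfrak b_t^+(w)=|\{v\in S:(w,v)\in I_t\}|$, $\mathfrak b_t^-(w)=|\{v\in S:(v,w)\in I_t\}|$, $\deg_t^+(w)=|\{v:(w,v)\in E,\ \mathfrak t(w,v)=t\}|$ and $\deg_t^-(w)=|\{v:(v,w)\in E,\ \mathfrak t(v,w)=t\}|$. Condition (GR1): $\mathfrak b_t^\star(w)\in\{0,1\}$ for all $t\in\mathcal T$, $\star\in\{+,-\}$, $w\in S$. Condition (GR2): for all $t\in\mathcal T$, $\star\in\{+,-\}$, $w\in S$, the numbers $\mathfrak b_t^\star(w)$ and $\deg_t^\star(w)$ are never simultaneously non-zero. *)

From mathcomp Require Import all_boot.
Set Implicit Arguments. Unset Strict Implicit. Unset Printing Implicit Defensive.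

(* Iterated graph systems (IGS).
   - S : finType is the vertex set of G_1 = (S, E); E : rel S is the set of
     directed edges (x,y).
   - T : finType is the set of types; tp : S -> S -> T is the typing function
     (only its values on E matter).
   - I : T -> rel S gives the gluing rules I_t. *)

Section IGS.
Variables (S T : finType) (E : rel S) (tp : S -> S -> T) (I : T -> rel S).

Definition is_IGS : Prop :=
  [/\ (0 < #|S|)%N,
      (forall x y, E x y -> ~~ E y x),
      (forall x y, connect (fun a b => E a b || E b a) x y),
      (forall t, exists x y, E x y && (tp x y == t))
    & (forall t, exists x y, I t x y)].

(* Edges of the replacement graphs, with their types.  [rep_edge_rev rw rv]
   works on REVERSED words (last letter first): for w = [w]_m w_{m+1},
   v = [v]_m v_{m+1} (both of length m+1) it returns
     Some t  iff (w,v) ∈ E_{m+1} with t_{m+1}(w,v) = t, and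
     None    iff (w,v) ∉ E_{m+1}.
   Rule (1): [w]_m = [v]_m and (w_{m+1},v_{m+1}) ∈ E, type t(w_{m+1},v_{m+1});
   rule (2): ([w]_m,[v]_m) ∈ E_m with type t' and (w_{m+1},v_{m+1}) ∈ I_t',
   type t'.  For m = 0 (words of length 1) rule (1) gives exactly G_1 with
   typing tp (the empty prefixes are equal, and the empty word is never an
   edge). *)
Fixpoint rep_edge_rev (rw rv : seq S) : option T :=
  match rw, rv with
  | a :: rw', b :: rv' =>
      if rw' == rv' then (if E a b then Some (tp a b) else None)
      else match rep_edge_rev rw' rv' with
           | Some t => if I t a b then Some t else None
           | None => None
           end
  | _, _ => None
  end.

Definition rep_edge (w v : seq S) : bool :=
  rep_edge_rev (rev w) (rev v) != None.

Definition rep_deg (m : nat) (w : m.-tuple S) : nat :=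
  #|[pred v : m.-tuple S | rep_edge w v || rep_edge v w]|.

Definition b_plus (t : T) (w : S) : nat := #|[pred v | I t w v]|.
Definition b_minus (t : T) (w : S) : nat := #|[pred v | I t v w]|.
Definition deg_plus (t : T) (w : S) : nat :=
  #|[pred v | E w v && (tp w v == t)]|.
Definition deg_minus (t : T) (w : S) : nat :=
  #|[pred v | E v w && (tp v w == t)]|.

Definition GR1 : Prop :=
  forall t w, (b_plus t w <= 1)%N /\ (b_minus t w <= 1)%N.

Definition GR2 : Prop :=
  forall t w, ~ ((0 < b_plus t w)%N /\ (0 < deg_plus t w)%N) /\
              ~ ((0 < b_minus t w)%N /\ (0 < deg_minus t w)%N).

Definition uniformly_bounded_degree : Prop :=
  exists B : nat, forall (m : nat) (w : m.-tuple S),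
    (0 < m)%N -> (rep_deg w <= B)%N.

End IGS.

From mathcomp Require Import all_boot zify.
Set Implicit Arguments. Unset Strict Implicit. Unset Printing Implicit Defensive.

(* Split the degree into out- and in-degree; reversing every edge and gluing
   rule swaps the two and swaps the [+] and [-] halves of (GR1)/(GR2), so it
   suffices to show that (GR1+) and (GR2+) hold iff out-degrees are bounded.
   Bounded: an out-neighbour v of w is determined by the type t of the edge
   and by the letter of v at the level where v forks off w.  Below that level
   every letter of v is forced by (GR1+), and (GR2+) prevents the two rules
   from competing at the same level and type.  Unbounded: if [I_t] glues [a]
   to [b1 != b2], then the word x a^B, for an edge x -> y of type t, has
   out-neighbours y {b1,b2}^B; if moreover [a -> z] has type t and [I_t]
   glues [a] to [c], then a^(B+1) has the out-neighbours a^j z c^(B-j)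
   forking off at every level j <= B. *)

Section OutDegree.

Variables (S T : finType) (E : rel S) (tp : S -> S -> T) (I : T -> rel S).

Local Notation edge := (rep_edge_rev E tp I).

Definition GR1_out : Prop := forall t a, b_plus I t a <= 1.

Definition GR2_out : Prop :=
  forall t a, ~ (0 < b_plus I t a /\ 0 < deg_plus E tp t a).

Definition out_deg m (w : m.-tuple S) : nat :=
  #|[pred v : m.-tuple S | rep_edge E tp I w v]|.

Definition bounded_out_deg : Prop :=
  exists B, forall m (w : m.-tuple S), 0 < m -> out_deg w <= B.

Lemma rep_edge_rev_cons t a b rw rv : edge (a :: rw) (b :: rv) = Some t ->
  [/\ rw = rv, E a b & tp a b = t] \/ [/\ rw != rv, edge rw rv = Some t & I t a b].
Proof.
rewrite /=; case: eqP => [->|/eqP neq]; first by case: ifP => // Eab [<-]; left.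
by case: (edge rw rv) => // t'; case: ifP => // It [<-]; right.
Qed.

Lemma rep_edge_rev_base a z r : E a z -> edge (a :: r) (z :: r) = Some (tp a z).
Proof. by move=> Eaz /=; rewrite eqxx Eaz. Qed.

Hypothesis E_irr : irreflexive E.

Lemma rep_edge_rev_diag r : edge r r = None.
Proof. by case: r => [|a r] //=; rewrite eqxx E_irr. Qed.

Lemma rep_edge_rev_glue t a n q rw rv : size q = n ->
  edge rw rv = Some t -> all (I t a) q -> edge (nseq n a ++ rw) (q ++ rv) = Some t.
Proof.
move=> <- e_rw_rv; elim: q => [|c q IH] //= /andP [Ic /IH e_q].
have /negbTE -> : nseq (size q) a ++ rw != q ++ rv.
  by apply/eqP => eq_rv; move: e_q; rewrite eq_rv rep_edge_rev_diag.
by rewrite e_q Ic.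
Qed.

(* Words are stored reversed, as in [rep_edge_rev].  [fork_letter r s] is the
   letter of [s] at the level where [s] forks off [r], and [fork_depth r s] is
   the length of the prefix the unreversed words share before that level. *)
Fixpoint fork_letter (r s : seq S) : option S :=
  match r, s with
  | _ :: r', b :: s' => if r' == s' then Some b else fork_letter r' s'
  | _, _ => None
  end.

Fixpoint fork_depth (r s : seq S) : nat :=
  match r, s with
  | _ :: r', _ :: s' => if r' == s' then size r' else fork_depth r' s'
  | _, _ => 0
  end.

Lemma fork_depth_catl p q r s :
  size p = size q -> r != s -> fork_depth (p ++ r) (q ++ s) = fork_depth r s.
Proof.
elim: p q => [|a p IH] [|b q] //= [size_pq] neq_rs.
by rewrite eqseq_cat // (negbTE neq_rs) andbF IH.
Qed.

Section Injectivity.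

Hypotheses (gr1 : GR1_out) (gr2 : GR2_out).

Lemma gluing_functional t a b1 b2 : I t a b1 -> I t a b2 -> b1 = b2.
Proof.
by have /card_le1_eqP le1 := gr1 t a => I1 I2; apply: le1; rewrite inE.
Qed.

Lemma gluing_no_edge a b z : I (tp a z) a b -> E a z = false.
Proof.
move=> Iab; apply/negP => Eaz; apply: (gr2 (t := tp a z) (a := a)).
by split; apply/card_gt0P; [exists b | exists z]; rewrite inE ?Eaz ?eqxx.
Qed.

Lemma fork_letter_inj t rw rv1 rv2 : edge rw rv1 = Some t -> edge rw rv2 = Some t ->
  fork_letter rw rv1 = fork_letter rw rv2 -> rv1 = rv2.
Proof.
elim: rw rv1 rv2 => [|a rw IH] [|b1 r1] [|b2 r2] //.
move=> /rep_edge_rev_cons [[<- E1 t1]|[n1 e1 I1]]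
       /rep_edge_rev_cons [[<- E2 t2]|[n2 e2 I2]] /=.
- by rewrite eqxx => -[->].
- by move: I2; rewrite -t1 => /gluing_no_edge; rewrite E1.
- by move: I1; rewrite -t2 => /gluing_no_edge; rewrite E2.
- rewrite (negbTE n1) (negbTE n2) => /(IH _ _ e1 e2) ->.
  by rewrite (gluing_functional I1 I2).
Qed.

Lemma out_deg_le m (w : m.-tuple S) : out_deg w <= #|{: option T * option S}|.
Proof.
pose f (v : m.-tuple S) := (edge (rev w) (rev v), fork_letter (rev w) (rev v)).
apply: (@leq_card_in _ _ f) => v1 v2; rewrite !inE /rep_edge /f.
case e1: (edge _ _) => [t|] // _ _ [e2 /(fork_letter_inj e1 (esym e2))].
by move/(congr1 rev); rewrite !revK => /val_inj.
Qed.

End Injectivity.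

Lemma size_le_out_deg (r : seq S) (L : seq (seq S)) : uniq L ->
  {in L, forall q, size q = size r /\ edge r q != None} ->
  size L <= out_deg (in_tuple (rev r)).
Proof.
move=> uniq_L out_L.
pose v (q : seq S) : (size (rev r)).-tuple S := insubd (in_tuple (rev r)) (rev q).
have val_v q : q \in L -> val (v q) = rev q.
  by case/out_L=> size_q _; rewrite val_insubd ifT // !size_rev size_q.
have uniq_vL : uniq (map v L).
  rewrite map_inj_in_uniq // => q1 q2 L1 L2 /(congr1 val).
  by rewrite !val_v // => /(congr1 rev); rewrite !revK.
rewrite -(size_map v) -(card_uniqP uniq_vL).
apply/subset_leq_card/subsetP => _ /mapP [q Lq ->].
by rewrite inE /rep_edge val_v // !revK; case: (out_L q Lq).
Qed.

Lemma GR1_out_of_bounded :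
  (forall t, exists x y, E x y && (tp x y == t)) -> bounded_out_deg -> GR1_out.
Proof.
move=> tp_onto [B out_le] t a; rewrite leqNgt; apply/negP.
case/card_gt1P=> b1 [b2 [I1 I2 b12]]; rewrite !inE in I1 I2.
have [x [y /andP [Exy /eqP tp_xy]]] := tp_onto t.
have e_xy : edge [:: x] [:: y] = Some t by rewrite rep_edge_rev_base // tp_xy.
pose r := nseq B a ++ [:: x].
pose L := [seq nseq i b1 ++ nseq (B - i) b2 ++ [:: y] | i <- iota 0 B.+1].
suff: size L <= B by rewrite size_map size_iota ltnn.
apply: (leq_trans _ (out_le _ (in_tuple (rev r)) _)); last first.
  by rewrite size_rev size_cat addn1.
apply: size_le_out_deg => [|q /mapP [i]].
  rewrite map_inj_in_uniq ?iota_uniq // => i j; rewrite !mem_iota => iB jB.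
  move/(congr1 (count_mem b1)); rewrite !count_cat !count_nseq /= eqxx.
  by rewrite eq_sym (negbTE b12); lia.
rewrite mem_iota => iB ->; split; first by rewrite !size_cat !size_nseq /=; lia.
rewrite catA (rep_edge_rev_glue _ e_xy) ?all_cat ?all_nseq ?I1 ?I2 ?orbT //.
by rewrite size_cat !size_nseq; lia.
Qed.

Lemma GR2_out_of_bounded : bounded_out_deg -> GR2_out.
Proof.
move=> [B out_le] t a [/card_gt0P [c Ic] /card_gt0P [z /andP [Eaz /eqP tp_az]]].
subst t; rewrite inE in Ic.
have az : a != z by apply: contraTneq Eaz => ->; rewrite E_irr.
have nseq_split j : j <= B -> nseq B.+1 a = nseq (B - j) a ++ a :: nseq j a.
  by move=> jB; rewrite -[a :: _]/(nseq j.+1 a) -nseqD; congr nseq; lia.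
pose g j := nseq (B - j) c ++ z :: nseq j a.
pose L := map g (iota 0 B.+1).
suff: size L <= B by rewrite size_map size_iota ltnn.
apply: (leq_trans _ (out_le _ (in_tuple (rev (nseq B.+1 a))) _)); last first.
  by rewrite size_rev.
apply: size_le_out_deg => [|q /mapP [j]].
  apply: (@map_uniq _ _ (fork_depth (nseq B.+1 a))).
  suff ->: map (fork_depth (nseq B.+1 a)) L = iota 0 B.+1 by apply: iota_uniq.
  rewrite -map_comp -[RHS]map_id; apply/eq_in_map => j; rewrite mem_iota => jB.
  rewrite /comp /g (nseq_split j) // fork_depth_catl ?size_nseq //=; last first.
    by rewrite eqseq_cons negb_and az.
  by rewrite eqxx size_nseq.
rewrite mem_iota => jB ->; split; first by rewrite size_cat /= !size_nseq; lia.
rewrite (nseq_split j) // (rep_edge_rev_glue _ (rep_edge_rev_base _ Eaz)) //.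
  by rewrite size_nseq.
by rewrite all_nseq Ic orbT.
Qed.

End OutDegree.

Lemma GR_out_iff_bounded_out_deg (S T : finType) (E : rel S) (tp : S -> S -> T)
    (I : T -> rel S) :
  irreflexive E -> (forall t, exists x y, E x y && (tp x y == t)) ->
  GR1_out I /\ GR2_out E tp I <-> bounded_out_deg E tp I.
Proof.
move=> E_irr tp_onto; split=> [[gr1 gr2] | bounded].
  by exists #|{: option T * option S}| => m w _; apply: out_deg_le.
by split; [apply: GR1_out_of_bounded | apply: GR2_out_of_bounded].
Qed.

Definition converse (A B : Type) (f : A -> A -> B) : A -> A -> B := fun x y => f y x.

Section Converse.

Variables (S T : finType) (E : rel S) (tp : S -> S -> T) (I : T -> rel S).

Local Notation E' := (converse E).
Local Notation tp' := (converse tp).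
Local Notation I' := (fun t => converse (I t)).

Lemma rep_edge_rev_converse r s :
  rep_edge_rev E' tp' I' r s = rep_edge_rev E tp I s r.
Proof. by elim: r s => [|a r IH] [|b s] //=; rewrite eq_sym IH. Qed.

Lemma rep_edge_converse w v : rep_edge E' tp' I' w v = rep_edge E tp I v w.
Proof. by rewrite /rep_edge rep_edge_rev_converse. Qed.

Lemma GR1_split : GR1 I <-> GR1_out I /\ GR1_out I'.
Proof.
split=> [gr1 | [gr1 gr1'] t a]; first by split=> t a; case: (gr1 t a).
by split; [apply: gr1 | apply: gr1'].
Qed.

Lemma GR2_split : GR2 E tp I <-> GR2_out E tp I /\ GR2_out E' tp' I'.
Proof.
split=> [gr2 | [gr2 gr2'] t a]; first by split=> t a; case: (gr2 t a).
by split; [apply: gr2 | apply: gr2'].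
Qed.

Lemma uniformly_bounded_degree_split : uniformly_bounded_degree E tp I <->
  bounded_out_deg E tp I /\ bounded_out_deg E' tp' I'.
Proof.
split=> [[B deg_le] | [[B1 out_le] [B2 in_le]]].
  split; exists B => m w m_gt0; apply: leq_trans (deg_le m w m_gt0);
    apply/subset_leq_card/subsetP => v;
    by rewrite !inE ?rep_edge_converse => ->; rewrite ?orbT.
exists (B1 + B2) => m w m_gt0.
apply: leq_trans (leq_add (out_le m w m_gt0) (in_le m w m_gt0)).
have -> : rep_deg E tp I w = #|[predU [pred v : m.-tuple S | rep_edge E tp I w v]
                                     & [pred v : m.-tuple S | rep_edge E' tp' I' w v]]|.
  by apply: eq_card => v; rewrite !inE rep_edge_converse.
by rewrite -cardUI leq_addr.
Qed.

End Converse.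

Theorem lemma3p5 (S T : finType) (E : rel S) (tp : S -> S -> T)
    (I : T -> rel S) :
  is_IGS E tp I ->
  (GR1 I /\ GR2 E tp I <-> uniformly_bounded_degree E tp I).
Proof.
move=> [_ E_asym _ tp_onto _].
have E_irr : irreflexive E.
  by move=> x; apply/negP => Exx; move: (E_asym x x Exx); rewrite Exx.
have E'_irr : irreflexive (converse E) := E_irr.
have tp'_onto t : exists x y, converse E x y && (converse tp x y == t).
  by have [x [y Exy]] := tp_onto t; exists y, x.
rewrite GR1_split GR2_split uniformly_bounded_degree_split.
rewrite -(GR_out_iff_bounded_out_deg I E_irr tp_onto).
rewrite -(GR_out_iff_bounded_out_deg (fun t => converse (I t)) E'_irr tp'_onto).
tauto.
Qed.
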